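(* Let $\mathbf{a}$ be a centered symplectic cellular automaton (CSCA) and let $\xi=(\xi_+,\xi_-)\in\mathcal{P}^2$ be a non-zero phase space vector with $\mathbf{a}\xi=u^n\xi$ for some $n\in\mathbb{N}$. Then: (1) $\mathbf{a}\bar\xi=u^{-n}\bar\xi$; (2) $\mathbf{a}$ is uniquely given by $$\mathbf{a}_{11}=\frac{u^n\xi_+\bar\xi_-+u^{-n}\bar\xi_+\xi_-}{\xi\wedge\bar\xi},\quad \mathbf{a}_{12}=\frac{(u^n+u^{-n})\xi_+\bar\xi_+}{\xi\wedge\bar\xi},\quad \mathbf{a}_{21}=\frac{(u^n+u^{-n})\xi_-\bar\xi_-}{\xi\wedge\bar\xi},\quad \mathbf{a}_{22}=\frac{u^{-n}\xi_+\bar\xi_-+u^{n}\bar\xi_+\xi_-}{\xi\wedge\bar\xi};$$ (3) $\mathrm{tr}\,\mathbf{a}=u^{-n}+u^n$; (4) every glider of $\mathbf{a}$ is a multiple (by an element of $\mathcal{P}$) of $$\left(\frac{\mathbf{a}_{12}}{\gcd(u^n+\mathbf{a}_{11},\mathbf{a}_{12})},\ \frac{u^n+\mathbf{a}_{11}}{\gcd(u^n+\mathbf{a}_{11},\mathbf{a}_{12})}\right)\quad\text{or of}\quad \left(\frac{\mathbf{a}_{12}}{\gcd(u^{-n}+\mathbf{a}_{11},\mathbf{a}_{12})},\ \frac{u^{-n}+\mathbf{a}_{11}}{\gcd(u^{-n}+\mathbf{a}_{11},\mathbf{a}_{12})}\right).$$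
   Context: $\mathcal{P}$ denotes the ring of Laurent polynomials in a variable $u$ over the field $\mathbb{Z}_2$ (all arithmetic mod 2). For $p\in\mathcal{P}$, $\bar p$ denotes the involution $p(u)\mapsto p(u^{-1})$; for vectors and matrices it is applied entrywise. $\mathcal{R}\subset\mathcal{P}$ is the subring of palindromes, $\bar p=p$. A centered symplectic cellular automaton (CSCA) is a $2\times 2$ matrix with entries in $\mathcal{R}$ and determinant $1$, acting on column vectors $\xi=(\xi_+,\xi_-)^T\in\mathcal{P}^2$ (phase space vectors, which label tensor products of Pauli matrices on a spin chain). A glider of $\mathbf{a}$ is a non-zero $\xi\in\mathcal{P}^2$ with $\mathbf{a}\xi=u^k\xi$ for some integer $k$. The wedge product is $\xi\wedge\eta=\xi_+\eta_-+\eta_+\xi_-$. *)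

From HB Require Import structures.
From mathcomp Require Import all_boot all_order all_algebra.
Set Implicit Arguments. Unset Strict Implicit. Unset Printing Implicit Defensive.
Import Order.TTheory GRing.Theory.
Local Open Scope ring_scope.

(* Polynomials over Z_2 and their fraction field Z_2(u).
   The ring of Laurent polynomials P is realized as the subring of
   Z_2(u) of elements of the form p(u) / u^k (predicate [laurent]). *)
Definition F2 := 'F_2.
Definition Frac := {fraction {poly F2}}.

Definition u : Frac := tofrac ('X : {poly F2}).

Definition laurent (x : Frac) : Prop :=
  exists (p : {poly F2}) (k : nat), x = tofrac p / u ^+ k.

(* the involution u |-> u^{-1}: on polynomials p(u) |-> p(u^{-1}),
   extended to the fraction field by applying it to numerator and
   denominator of (a representative of) the fraction. *)
Definition barP (p : {poly F2}) : Frac := (map_poly (fun c : F2 => tofrac (c%:P)) p).[u^-1].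
Definition bar (x : Frac) : Frac :=
  barP (\n_(repr x)) / barP (\d_(repr x)).

Definition palindrome (x : Frac) : Prop := laurent x /\ bar x = x.

Definition phase (xi : 'cV[Frac]_2) : Prop := forall i, laurent (xi i 0).
Definition xplus (xi : 'cV[Frac]_2) : Frac := xi 0 0.
Definition xminus (xi : 'cV[Frac]_2) : Frac := xi 1 0.
Definition barv (xi : 'cV[Frac]_2) : 'cV[Frac]_2 := map_mx bar xi.

Definition CSCA (a : 'M[Frac]_2) : Prop :=
  (forall i j, palindrome (a i j)) /\ \det a = 1.

Definition wedge (xi eta : 'cV[Frac]_2) : Frac :=
  xplus xi * xminus eta + xplus eta * xminus xi.

Definition glider (a : 'M[Frac]_2) (xi : 'cV[Frac]_2) : Prop :=
  phase xi /\ xi != 0 /\ exists k : int, a *m xi = (u ^ k) *: xi.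

(* divisibility and gcd in the ring P of Laurent polynomials
   (a gcd is determined up to a unit of P) *)
Definition ldvd (d x : Frac) : Prop := exists c, laurent c /\ x = c * d.
Definition is_lgcd (g x y : Frac) : Prop :=
  laurent g /\ ldvd g x /\ ldvd g y /\
  forall d, laurent d -> ldvd d x -> ldvd d y -> ldvd d g.

Definition vec2 (x y : Frac) : 'cV[Frac]_2 :=
  \col_i (if i == 0 then x else y).

Definition lmultiple (eta v : 'cV[Frac]_2) : Prop :=
  exists c, laurent c /\ eta = c *: v.

(* Palindromic entries make [a] commute with the involution, so [a ξ = u^n ξ] gives
   [a ξ̄ = u^-n ξ̄].  As [u^n <> u^-n], the eigenvectors [ξ] and [ξ̄] are independent: their
   wedge, which in characteristic 2 is the determinant of the matrix with columns [ξ], [ξ̄],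
   does not vanish, and Cramer's rule writes the entries of [a] in terms of [ξ] and [ξ̄].
   Since [det a = 1] and [tr a = u^n + u^-n], the characteristic polynomial of [a] is
   [(X - u^n)(X - u^-n)], so every glider has eigenvalue [u^n] or [u^-n]; the first row of
   [a] then makes it proportional to [(a_12, u^±n + a_11)], and Bezout's identity in the
   principal ideal domain [P] shows that the factor of proportionality lies in [P] once this
   vector is divided by the gcd of its entries. *)

From HB Require Import structures.
From mathcomp Require Import all_boot all_order all_algebra.
From mathcomp Require Import ring zify.
Set Implicit Arguments. Unset Strict Implicit. Unset Printing Implicit Defensive.
Import GRing.Theory.
Local Open Scope ring_scope.

(** * The field Z_2(u) and its involution *)

Lemma pchar2_Frac : 2 \in [pchar Frac].
Proof. by apply: (rmorph_pchar (@tofrac {poly F2})); rewrite pchar_poly; apply: pchar_Fp. Qed.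

Lemma u_neq0 : u != 0.
Proof. by rewrite tofrac_eq0 polyX_eq0. Qed.

Lemma uX_neq_uN n : (0 < n)%N -> u ^+ n != u ^- n.
Proof.
move=> n_gt0; apply/eqP => /(congr1 ( *%R (u ^+ n))).
rewrite divff ?expf_neq0 ?u_neq0 // -exprD -tofracXn -tofrac1 => /eqP.
rewrite tofrac_eq => /eqP XnE; have := @size_polyXn F2 (n + n).
by rewrite XnE size_poly1 => -[]; case: (n) n_gt0.
Qed.

Lemma barPE p : barP p = (map_poly ((@tofrac {poly F2}) \o polyC) p).[u^-1].
Proof. by []. Qed.

Lemma barP_is_zmod_morphism : zmod_morphism barP.
Proof. by move=> p q; rewrite !barPE rmorphB hornerD hornerN. Qed.

Lemma barP_is_monoid_morphism : monoid_morphism barP.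
Proof. by split=> [|p q]; rewrite !barPE ?rmorph1 ?hornerC // rmorphM hornerM. Qed.

HB.instance Definition _ :=
  GRing.isZmodMorphism.Build {poly F2} Frac barP barP_is_zmod_morphism.
HB.instance Definition _ :=
  GRing.isMonoidMorphism.Build {poly F2} Frac barP barP_is_monoid_morphism.

Lemma barPX : barP 'X = u^-1.
Proof. by rewrite barPE map_polyX hornerX. Qed.

Lemma barP_reversed (p : {poly F2}) :
  u ^+ (size p).-1 * barP p = tofrac (\poly_(i < size p) p`_((size p).-1 - i)).
Proof.
rewrite barPE horner_coef size_map_poly mulr_sumr poly_def rmorph_sum.
rewrite [RHS](reindex_inj rev_ord_inj); apply: eq_bigr => i _ /=.
have sub_split k s : (k < s -> s.-1 - (s - k.+1) = k /\ s.-1 = (s - k.+1) + k)%N.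
  by lia.
have [lt_ip d_split] := sub_split _ _ (ltn_ord i).
rewrite lt_ip coef_map /= -mul_polyC !rmorphM rmorphXn /= -/u d_split exprD exprVn.
by rewrite -mulrA (mulrCA (u ^+ i)) divff ?mulr1 1?mulrC // expf_neq0 ?u_neq0.
Qed.

Lemma barP_eq0 (p : {poly F2}) : (barP p == 0) = (p == 0).
Proof.
apply/eqP/eqP => [bp0|->]; last exact: rmorph0.
apply/eqP; apply: contraT => p_neq0.
have := barP_reversed p; rewrite bp0 mulr0 => /esym/eqP.
rewrite tofrac_eq0 => /eqP/polyP/(_ 0%N).
rewrite coef_poly size_poly_gt0 p_neq0 subn0 -lead_coefE coef0 => /eqP.
by rewrite lead_coef_eq0 (negPf p_neq0).
Qed.

Lemma tofrac_numden (x : Frac) : x = tofrac \n_(repr x) / tofrac \d_(repr x).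
Proof.
have d_neq0 : tofrac \d_(repr x) != 0 :> Frac by rewrite tofrac_eq0 denom_ratioP.
apply: (mulIf d_neq0); rewrite divfK // -{1}(reprK x); set r := repr x.
unlock tofrac.
transitivity ((\pi_Frac)%qT (FracField.mulf r (Ratio \d_r 1))).
  by rewrite FracField.pi_mul.
apply/eqP; rewrite eqmodE /=.
rewrite FracField.equivfE /FracField.mulf !numden_Ratio ?mulr1 ?denom_ratioP ?oner_neq0 //.
by rewrite mulrC.
Qed.

Lemma bar_frac (p q : {poly F2}) : q != 0 -> bar (tofrac p / tofrac q) = barP p / barP q.
Proof.
move=> q_neq0; rewrite /bar.
have := tofrac_numden (tofrac p / tofrac q); have := denom_ratioP (repr (tofrac p / tofrac q)).
move: (\n_ _) (\d_ _) => n d d_neq0 pqE.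
have : tofrac (p * d) = tofrac (n * q) :> Frac.
  by rewrite !tofracM -[tofrac p](divfK (_ : tofrac q != 0)) ?tofrac_eq0 // pqE mulrAC divfK
    // tofrac_eq0.
move=> /eqP; rewrite tofrac_eq => /eqP/(congr1 barP); rewrite !rmorphM => e.
by apply/eqP; rewrite eqr_div ?barP_eq0 // -e mulrC.
Qed.

Lemma fracP (P : Frac -> Prop) :
  (forall p q, q != 0 -> P (tofrac p / tofrac q)) -> forall x, P x.
Proof. by move=> Pfrac x; rewrite [x]tofrac_numden; apply/Pfrac/denom_ratioP. Qed.

Lemma bar_tofrac p : bar (tofrac p) = barP p.
Proof. by rewrite -[tofrac p]divr1 -tofrac1 bar_frac ?oner_neq0 // rmorph1 divr1. Qed.

Lemma bar_is_monoid_morphism : monoid_morphism bar.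
Proof.
split=> [|x y]; first by rewrite -tofrac1 bar_tofrac rmorph1.
elim/fracP: x => p1 q1 q1_neq0; elim/fracP: y => p2 q2 q2_neq0.
by rewrite mulf_div -!tofracM !bar_frac ?mulf_neq0 // !rmorphM mulf_div.
Qed.

Lemma barD x y : bar (x + y) = bar x + bar y.
Proof.
elim/fracP: x => p1 q1 q1_neq0; elim/fracP: y => p2 q2 q2_neq0.
rewrite addf_div ?tofrac_eq0 // -!tofracM -tofracD !bar_frac ?mulf_neq0 //.
by rewrite addf_div ?barP_eq0 // rmorphD !rmorphM.
Qed.

Lemma bar_is_zmod_morphism : zmod_morphism bar.
Proof. by move=> x y; apply: (addIr (bar y)); rewrite -barD !subrK. Qed.

HB.instance Definition _ := GRing.isZmodMorphism.Build Frac Frac bar bar_is_zmod_morphism.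
HB.instance Definition _ := GRing.isMonoidMorphism.Build Frac Frac bar bar_is_monoid_morphism.

Lemma bar_eq0 x : (bar x == 0) = (x == 0).
Proof. exact: fmorph_eq0. Qed.

Lemma bar_u : bar u = u^-1.
Proof. by rewrite bar_tofrac barPX. Qed.

Lemma bar_uX n : bar (u ^+ n) = u ^- n.
Proof. by rewrite rmorphXn /= bar_u exprVn. Qed.

Lemma bar_uN n : bar (u ^- n) = u ^+ n.
Proof. by rewrite fmorphV /= bar_uX invrK. Qed.

(** * Two by two matrices *)

Lemma lift0_ord0 : lift ord0 (ord0 : 'I_1) = 1 :> 'I_2.
Proof. exact: val_inj. Qed.

Lemma mulmx2E (R : pzSemiRingType) (A : 'M[R]_2) (v : 'cV[R]_2) i :
  (A *m v) i 0 = A i 0 * v 0 0 + A i 1 * v 1 0.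
Proof. by rewrite mxE !big_ord_recl big_ord0 addr0 lift0_ord0. Qed.

Lemma mxtrace2 (R : pzSemiRingType) (A : 'M[R]_2) : \tr A = A 0 0 + A 1 1.
Proof. by rewrite /mxtrace !big_ord_recl big_ord0 addr0 lift0_ord0. Qed.

Lemma det_mx22 (R : comPzRingType) (A : 'M[R]_2) :
  \det A = A 0 0 * A 1 1 - A 0 1 * A 1 0.
Proof.
rewrite (expand_det_row _ 0) !big_ord_recl big_ord0 addr0 /cofactor !det_mx11 !mxE.
rewrite lift0_ord0 (_ : lift 1 ord0 = 0); last exact: val_inj.
by rewrite /= expr0 expr1 mul1r mulN1r mulrN.
Qed.

Lemma col2_eq (R : Type) (v w : 'cV[R]_2) : v 0 0 = w 0 0 -> v 1 0 = w 1 0 -> v = w.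
Proof.
move=> v0 v1; apply/matrixP => i j; rewrite (ord1 j).
by case: i => [[|[|//]]] ? /=; [move: v0 | move: v1];
  congr (_ = _); congr (_ _ _); apply: val_inj.
Qed.

Lemma eigenvector2_char (R : idomainType) (A : 'M[R]_2) (v : 'cV[R]_2) c :
  v != 0 -> A *m v = c *: v -> c ^+ 2 - \tr A * c + \det A = 0.
Proof.
move=> v_neq0 Av; rewrite mxtrace2 det_mx22.
have row i : A i 0 * v 0 0 + A i 1 * v 1 0 - c * v i 0 = 0.
  by rewrite -mulmx2E Av mxE subrr.
apply/eqP; apply: contraNT v_neq0 => chi_neq0; apply/eqP/col2_eq;
  apply: (mulfI chi_neq0); rewrite mxE mulr0.
- transitivity ((A 1 1 - c) * (A 0 0 * v 0 0 + A 0 1 * v 1 0 - c * v 0 0)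
                - A 0 1 * (A 1 0 * v 0 0 + A 1 1 * v 1 0 - c * v 1 0)); first by ring.
  by rewrite !row !mulr0 subrr.
- transitivity ((A 0 0 - c) * (A 1 0 * v 0 0 + A 1 1 * v 1 0 - c * v 1 0)
                - A 1 0 * (A 0 0 * v 0 0 + A 0 1 * v 1 0 - c * v 0 0)); first by ring.
  by rewrite !row !mulr0 subrr.
Qed.

Lemma cramer2_pchar2 (R : comNzRingType) (r0 r1 x0 x1 y0 y1 : R) :
  2 \in [pchar R] ->
  r0 * (x0 * y1 + y0 * x1) = (r0 * x0 + r1 * x1) * y1 + (r0 * y0 + r1 * y1) * x1 /\
  r1 * (x0 * y1 + y0 * x1) = (r0 * x0 + r1 * x1) * y0 + (r0 * y0 + r1 * y1) * x0.
Proof.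
move=> pchar2R; split.
- by rewrite -[LHS]addr0 -(addrr_pchar2 pchar2R (r1 * x1 * y1)); ring.
- by rewrite -[LHS]addr0 -(addrr_pchar2 pchar2R (r0 * x0 * y0)); ring.
Qed.

(** * Divisibility in the ring of Laurent polynomials *)

Lemma laurent_tofrac p : laurent (tofrac p).
Proof. by exists p, 0%N; rewrite expr0 divr1. Qed.

Lemma laurent_uX k : laurent (u ^+ k).
Proof. by rewrite -tofracXn; apply: laurent_tofrac. Qed.

Lemma laurent_uN k : laurent (u ^- k).
Proof. by exists 1, k; rewrite tofrac1 mul1r. Qed.

Lemma laurentM x y : laurent x -> laurent y -> laurent (x * y).
Proof.
move=> [p [i ->]] [q [j ->]]; exists (p * q), (i + j)%N.
by rewrite mulf_div tofracM exprD.
Qed.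

Lemma laurentD x y : laurent x -> laurent y -> laurent (x + y).
Proof.
move=> [p [i ->]] [q [j ->]]; exists (p * 'X^j + q * 'X^i), (i + j)%N.
by rewrite addf_div ?expf_neq0 ?u_neq0 // tofracD !tofracM !tofracXn exprD.
Qed.

Lemma ldvd_tofrac (p q : {poly F2}) k : p %| q -> ldvd (tofrac p) (tofrac q / u ^+ k).
Proof.
move=> /divpK qE; exists (tofrac (q %/ p) / u ^+ k); split.
  exact: laurentM (laurent_tofrac _) (laurent_uN _).
by rewrite -{1}qE tofracM mulrAC.
Qed.

(* Bezout's identity in F_2[u] transfers to its localization [P] at [u]. *)
Lemma laurent_bezout_divisor x y : laurent x -> laurent y ->
  exists al be, [/\ laurent al, laurent be,
                    ldvd (al * x + be * y) x & ldvd (al * x + be * y) y].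
Proof.
move=> [X [i ->]] [Y [j ->]]; have [[A B] /= ABgcd] := Bezoutp X Y.
exists (tofrac A * u ^+ i), (tofrac B * u ^+ j).
have -> : tofrac A * u ^+ i * (tofrac X / u ^+ i) + tofrac B * u ^+ j * (tofrac Y / u ^+ j)
          = tofrac (A * X + B * Y).
  by rewrite tofracD !tofracM -!mulrA !(mulrCA (u ^+ _)) !divff ?expf_neq0 ?u_neq0 // !mulr1.
split; try exact: laurentM (laurent_tofrac _) (laurent_uX _);
  by apply: ldvd_tofrac; rewrite (eqp_dvdl _ ABgcd) ?dvdp_gcdl ?dvdp_gcdr.
Qed.

Definition lcoprime (x y : Frac) : Prop :=
  forall d, laurent d -> ldvd d x -> ldvd d y -> ldvd d 1.

Lemma lcoprime_bezout x y : laurent x -> laurent y -> lcoprime x y ->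
  exists al be, [/\ laurent al, laurent be & al * x + be * y = 1].
Proof.
move=> lx ly xy_coprime; have [al [be [lal lbe gx gy]]] := laurent_bezout_divisor lx ly.
have [c [lc oneE]] := xy_coprime _ (laurentD (laurentM lal lx) (laurentM lbe ly)) gx gy.
by exists (c * al), (c * be); split; [exact: laurentM | exact: laurentM | rewrite oneE; ring].
Qed.

Lemma lcoprime_laurent x y c : lcoprime x y -> laurent x -> laurent y ->
  laurent (c * x) -> laurent (c * y) -> laurent c.
Proof.
move=> xy_coprime lx ly lcx lcy; have [al [be [lal lbe E]]] := lcoprime_bezout lx ly xy_coprime.
have -> : c = al * (c * x) + be * (c * y) by rewrite -[LHS]mulr1 -E; ring.
exact: laurentD (laurentM lal lcx) (laurentM lbe lcy).
Qed.

Lemma ldvd_laurent_div g v : g != 0 -> ldvd g v -> laurent (v / g).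
Proof. by move=> g_neq0 [c [lc ->]]; rewrite mulfK. Qed.

Lemma is_lgcd_neq0 g v w : v != 0 -> is_lgcd g v w -> g != 0.
Proof. by move=> v_neq0 [_ [[c [_ vE]] _]]; apply: contraNneq v_neq0 => g0; rewrite vE g0 mulr0. Qed.

Lemma is_lgcd_lcoprime g v w : g != 0 -> is_lgcd g v w -> lcoprime (v / g) (w / g).
Proof.
move=> g_neq0 [lg [_ [_ gmax]]] d ld [c1 [lc1 vE]] [c2 [lc2 wE]].
have [e [le gE]] : ldvd (d * g) g.
  apply: gmax; first exact: laurentM.
  - by exists c1; split; rewrite // mulrA -vE divfK.
  - by exists c2; split; rewrite // mulrA -wE divfK.
by exists e; split => //; apply: (mulIf g_neq0); rewrite mul1r -mulrA -gE.
Qed.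

Lemma lmultiple_of_proportional (v w g : Frac) (eta : 'cV[Frac]_2) :
  v != 0 -> is_lgcd g v w -> phase eta -> eta 0 0 * v = w * eta 1 0 ->
  lmultiple eta (vec2 (w / g) (v / g)).
Proof.
move=> v_neq0 gcd_g eta_phase prop; have g_neq0 := is_lgcd_neq0 v_neq0 gcd_g.
have [_ [gv [gw _]]] := gcd_g.
have vg_neq0 : v / g != 0 := mulf_neq0 v_neq0 (invr_neq0 g_neq0).
pose c := eta 1 0 / (v / g).
have cv : c * (v / g) = eta 1 0 by rewrite divfK.
have cw : c * (w / g) = eta 0 0.
  by apply: (mulIf v_neq0); rewrite prop -cv; ring.
have lcv : laurent (c * (v / g)) by rewrite cv; apply: eta_phase.
have lcw : laurent (c * (w / g)) by rewrite cw; apply: eta_phase.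
exists c; split.
  exact: lcoprime_laurent (is_lgcd_lcoprime g_neq0 gcd_g)
    (ldvd_laurent_div g_neq0 gv) (ldvd_laurent_div g_neq0 gw) lcv lcw.
by apply: col2_eq; rewrite !mxE /= ?cw ?cv.
Qed.

(** * Eigenvectors of a CSCA *)

Lemma eigenpair_entries (a : 'M[Frac]_2) (xi eta : 'cV[Frac]_2) l m :
  a *m xi = l *: xi -> a *m eta = m *: eta ->
  [/\ a 0 0 * wedge xi eta = l * xplus xi * xminus eta + m * xplus eta * xminus xi,
      a 0 1 * wedge xi eta = (l + m) * xplus xi * xplus eta,
      a 1 0 * wedge xi eta = (l + m) * xminus xi * xminus eta &
      a 1 1 * wedge xi eta = m * xplus xi * xminus eta + l * xplus eta * xminus xi].
Proof.
move=> Axi Aeta.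
have rows i : a i 0 * xi 0 0 + a i 1 * xi 1 0 = l * xi i 0 /\
              a i 0 * eta 0 0 + a i 1 * eta 1 0 = m * eta i 0.
  by rewrite -!mulmx2E Axi Aeta !mxE.
have [[x0 y0] [x1 y1]] := (rows 0, rows 1).
have [c00 c01] := cramer2_pchar2 (a 0 0) (a 0 1) (xi 0 0) (xi 1 0) (eta 0 0) (eta 1 0) pchar2_Frac.
have [c10 c11] := cramer2_pchar2 (a 1 0) (a 1 1) (xi 0 0) (xi 1 0) (eta 0 0) (eta 1 0) pchar2_Frac.
rewrite /wedge /xplus /xminus c00 c01 c10 c11 x0 y0 x1 y1.
by split; ring.
Qed.

Lemma eigenpair_trace (a : 'M[Frac]_2) (xi eta : 'cV[Frac]_2) l m :
  a *m xi = l *: xi -> a *m eta = m *: eta -> wedge xi eta != 0 -> \tr a = l + m.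
Proof.
move=> Axi Aeta w_neq0; have [e00 _ _ e11] := eigenpair_entries Axi Aeta.
by apply: (mulIf w_neq0); rewrite mxtrace2 mulrDl e00 e11 /wedge; ring.
Qed.

Lemma palindromic_eigen_bar (a : 'M[Frac]_2) (xi : 'cV[Frac]_2) l :
  (forall i j, palindrome (a i j)) -> a *m xi = l *: xi ->
  a *m barv xi = bar l *: barv xi.
Proof.
move=> pal Axi; have -> : a = map_mx bar a by apply/matrixP => i j; rewrite mxE (pal i j).2.
by rewrite -map_mxM Axi map_mxZ.
Qed.

Lemma eigen_lmultiple (a : 'M[Frac]_2) (eta : 'cV[Frac]_2) l g :
  phase eta -> a *m eta = l *: eta -> a 0 0 != l ->
  is_lgcd g (l + a 0 0) (a 0 1) ->
  lmultiple eta (vec2 (a 0 1 / g) ((l + a 0 0) / g)).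
Proof.
move=> eta_phase Aeta a00_neq_l gcd_g; apply: (lmultiple_of_proportional _ gcd_g eta_phase).
  by rewrite addr_eq0 (oppr_pchar2 pchar2_Frac) eq_sym.
have row0 : a 0 0 * eta 0 0 + a 0 1 * eta 1 0 = l * eta 0 0 by rewrite -mulmx2E Aeta mxE.
by rewrite mulrDr ![eta 0 0 * _]mulrC -row0 addrAC (addrr_pchar2 pchar2_Frac) add0r mulrC.
Qed.

Lemma palindrome_neq_uXN x n : palindrome x -> (0 < n)%N -> x != u ^+ n /\ x != u ^- n.
Proof.
move=> [_ bar_x] n_gt0; split; apply: contraNneq (uX_neq_uN n_gt0) => xE.
- by rewrite -bar_uX -xE bar_x.
- by rewrite -xE -[u ^+ n]bar_uN -xE bar_x.
Qed.

Lemma wedge_barv_neq0 (a : 'M[Frac]_2) (xi : 'cV[Frac]_2) n : (0 < n)%N -> xi != 0 ->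
  a *m xi = u ^+ n *: xi -> a *m barv xi = u ^- n *: barv xi -> wedge xi (barv xi) != 0.
Proof.
move=> n_gt0 xi_neq0 Axi Abxi; apply: contra xi_neq0 => /eqP w0.
have [_ e01 e10 _] := eigenpair_entries Axi Abxi.
have sum_neq0 : u ^+ n + u ^- n != 0.
  by rewrite addr_eq0 (oppr_pchar2 pchar2_Frac) uX_neq_uN.
have entry_eq0 x : 0 = (u ^+ n + u ^- n) * x * bar x -> x = 0.
  by move/esym/eqP; rewrite -mulrA mulf_eq0 (negPf sum_neq0) mulf_eq0 bar_eq0 orbb => /eqP.
rewrite w0 !mulr0 /xplus /xminus !mxE in e01 e10.
by apply/eqP/col2_eq; rewrite mxE; [exact: entry_eq0 e01 | exact: entry_eq0 e10].
Qed.

Lemma eigenvalue_uXN (a : 'M[Frac]_2) (eta : 'cV[Frac]_2) n c :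
  \det a = 1 -> \tr a = u ^- n + u ^+ n -> eta != 0 -> a *m eta = c *: eta ->
  c = u ^+ n \/ c = u ^- n.
Proof.
move=> det1 tra eta_neq0 Aeta; have := eigenvector2_char eta_neq0 Aeta.
rewrite det1 tra -(divff (expf_neq0 n u_neq0)).
have -> : c ^+ 2 - (u ^- n + u ^+ n) * c + u ^+ n / u ^+ n = (c - u ^+ n) * (c - u ^- n).
  by ring.
by move/eqP; rewrite mulf_eq0 !subr_eq0 => /orP[/eqP|/eqP]; [left|right].
Qed.

Theorem mainTheorem1 (a : 'M[Frac]_2) (xi : 'cV[Frac]_2) (n : nat) :
  CSCA a -> phase xi -> xi != 0 -> (0 < n)%N ->
  a *m xi = u ^+ n *: xi ->
  let xp := xplus xi in let xm := xminus xi in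
  let bp := bar (xplus xi) in let bm := bar (xminus xi) in
  let w := wedge xi (barv xi) in
  (* (1) *)
  a *m barv xi = u ^- n *: barv xi /\
  (* (2) *)
  w != 0 /\
  a 0 0 = (u ^+ n * xp * bm + u ^- n * bp * xm) / w /\
  a 0 1 = (u ^+ n + u ^- n) * xp * bp / w /\
  a 1 0 = (u ^+ n + u ^- n) * xm * bm / w /\
  a 1 1 = (u ^- n * xp * bm + u ^+ n * bp * xm) / w /\
  (* (3) *)
  \tr a = u ^- n + u ^+ n /\
  (* (4) *)
  (forall g1 g2 : Frac,
     is_lgcd g1 (u ^+ n + a 0 0) (a 0 1) ->
     is_lgcd g2 (u ^- n + a 0 0) (a 0 1) ->
     forall eta, glider a eta ->
       lmultiple eta (vec2 (a 0 1 / g1) ((u ^+ n + a 0 0) / g1)) \/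
       lmultiple eta (vec2 (a 0 1 / g2) ((u ^- n + a 0 0) / g2))).
Proof.
move=> [pal det1] _ xi_neq0 n_gt0 Axi xp xm bp bm w.
have Abxi : a *m barv xi = u ^- n *: barv xi.
  by rewrite (palindromic_eigen_bar pal Axi) bar_uX.
have w_neq0 : w != 0 := wedge_barv_neq0 n_gt0 xi_neq0 Axi Abxi.
have [e00 e01 e10 e11] := eigenpair_entries Axi Abxi.
rewrite /xplus /xminus !mxE in e00 e01 e10 e11.
have tra : \tr a = u ^- n + u ^+ n by rewrite (eigenpair_trace Axi Abxi w_neq0) addrC.
have divw x y : x * w = y -> x = y / w by move=> <-; rewrite mulfK.
split; first exact: Abxi.
split; first exact: w_neq0.
split; first exact: divw e00.
split; first exact: divw e01.
split; first exact: divw e10.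
split; first exact: divw e11.
split; first exact: tra.
move=> g1 g2 gcd1 gcd2 eta [eta_phase [eta_neq0 [k Aeta]]].
have [a00_neq_uX a00_neq_uN] := palindrome_neq_uXN (pal 0 0) n_gt0.
have [uk_uX|uk_uN] := eigenvalue_uXN det1 tra eta_neq0 Aeta; rewrite ?uk_uX ?uk_uN in Aeta.
- by left; apply: eigen_lmultiple gcd1.
- by right; apply: eigen_lmultiple gcd2.
Qed.
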